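(* Let $\partial$ be an intrinsic dimension function (in the sense defined in the context), and let $(X,d,\mu)$ be a space with metric and measure such that the support of $\mu$ is all of $X$. Then $\partial(X)=+\infty$ if and only if $X$ is a singleton, $X\simeq\{\ast\}$.
   Context: A space with metric and measure is a triple $(X,d,\mu)$ where $(X,d)$ is a metric space and $\mu$ is a (Borel) probability measure on $X$. A feature is a $1$-Lipschitz function $f\colon X\to\mathbb R$, i.e. $|f(x)-f(y)|\le d(x,y)$; $\mathcal{L}ip_1(X)$ denotes the set of all of them. For such $f$, $M_f$ denotes a median: $\mu\{f\ge M_f\}\ge 1/2$ and $\mu\{f\le M_f\}\ge 1/2$. The concentration function of $X$ is $\alpha_X(0)=1/2$ and, for $\varepsilon>0$, $\alpha_X(\varepsilon)=\sup_{f\in\mathcal{L}ip_1(X)}\mu\{x: f(x)\ge M_f+\varepsilon\}$ (equivalently $1-\inf\{\mu(A_\varepsilon):\mu(A)\ge 1/2\}$, where $A_\varepsilon$ is the open $\varepsilon$-neighbourhood of $A$). A sequence $(X_n)$ of spaces with metric and measure is a Lévy family if $\alpha_{X_n}(\varepsilon)\to 0$ for every $\varepsilon>0$. Gromov distance: a parametrization of $(X,\mu)$ is a map $\phi\colon[0,1]\to X$ such that $\mu(A)$ equals the Lebesgue measure of $\phi^{-1}(A)$ for all (measurable) $A\subseteq X$. On measurable functions on $[0,1]$ use the metric of convergence in measure $\mathrm{me}_1(f,g)=\inf\{\varepsilon>0: \lambda\{t:|f(t)-g(t)|>\varepsilon\}<\varepsilon\}$ ($\lambda$ = Lebesgue measure).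 The Gromov distance $d_{conc}(X,Y)$ is the infimum, over all parametrizations $\phi$ of $X$ and $\psi$ of $Y$, of the Hausdorff distance (with respect to $\mathrm{me}_1$) between $\{f\circ\phi: f\in\mathcal{L}ip_1(X)\}$ and $\{g\circ\psi: g\in\mathcal{L}ip_1(Y)\}$. An intrinsic dimension function is a function $\partial$ assigning to every space with metric and measure a value in $[0,\infty)\cup\{+\infty\}$ and satisfying: (Axiom 1, concentration) for every sequence $(X_n)$ of spaces with metric and measure, $\partial(X_n)\uparrow\infty$ if and only if $(X_n)$ is a Lévy family; (Axiom 2, smooth dependence) if $d_{conc}(X_n,X)\to 0$ then $\partial(X_n)\to\partial(X)$; (Axiom 3, normalization) $\partial(\mathbb S^n)=\Theta(n)$, where $\mathbb S^n$ is the unit sphere in $\mathbb R^{n+1}$ with the Euclidean distance and the rotation-invariant probability measure. *)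

From HB Require Import structures.
From mathcomp Require Import all_boot all_order all_algebra.
From mathcomp Require Import all_classical all_reals all_analysis.

Set Implicit Arguments.
Unset Strict Implicit.
Unset Printing Implicit Defensive.

Import Order.TTheory GRing.Theory Num.Theory.
Import numFieldNormedType.Exports.
Local Open Scope classical_set_scope.
Local Open Scope ring_scope.

Section MMSpaces.
Variable R : realType.

Definition mball {T : Type} (d : T -> T -> R) (x : T) (r : R) : set T :=
  [set y | d x y < r].

Definition metric_open {T : Type} (d : T -> T -> R) : set (set T) :=
  [set A | forall x, A x -> exists2 r : R, 0 < r & mball d x r `<=` A].

Definition is_metric {T : Type} (d : T -> T -> R) : Prop :=
  [/\ (forall x y, 0 <= d x y),
      (forall x y, d x y = 0 <-> x = y),
      (forall x y, d x y = d y x) &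
      (forall x y z, d x z <= d x y + d y z)].

(** A space with metric and measure: a metric space (X,d) together with a
    Borel probability measure (the sigma-algebra is the one generated by the
    open sets of d). *)
Record mmspace := MMSpace {
  mm_carrier : pointedType;
  mm_dist : mm_carrier -> mm_carrier -> R;
  mm_metric : is_metric mm_dist;
  mm_mu : probability (g_sigma_algebraType (metric_open mm_dist)) R }.

Arguments mm_dist : clear implicits.
Arguments mm_mu : clear implicits.
Arguments mm_metric : clear implicits.

Definition mmpt (X : mmspace) := g_sigma_algebraType (metric_open (mm_dist X)).

Definition full_support (X : mmspace) : Prop :=
  forall (x : mmpt X) (r : R), 0 < r -> (0 < mm_mu X (mball (mm_dist X) x r))%E.

Definition Lip1 (X : mmspace) (f : mmpt X -> R) : Prop :=
  forall x y, `|f x - f y| <= mm_dist X x y.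

Definition is_median (X : mmspace) (f : mmpt X -> R) (M : R) : Prop :=
  ((2^-1)%:E <= mm_mu X [set x | (M <= f x)%R])%E /\
  ((2^-1)%:E <= mm_mu X [set x | (f x <= M)%R])%E.

Definition conc_fun (X : mmspace) (eps : R) : \bar R :=
  if eps == 0 then (2^-1)%:E else
  ereal_sup [set mm_mu X [set x | fM.2 + eps <= fM.1 x] |
              fM in [set fM : (mmpt X -> R) * R | Lip1 fM.1 /\ is_median fM.1 fM.2]].

Definition Levy_family (Xn : nat -> mmspace) : Prop :=
  forall eps : R, 0 < eps -> (fun n => conc_fun (Xn n) eps) @ \oo --> 0%E.

Definition I01 : set R := `[0%R, 1%R]%classic.

(** parametrizations: phi : [0,1] -> X (represented as a function on R,
    only its restriction to [0,1] matters), Borel measurable on [0,1], whose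
    push-forward of Lebesgue measure on [0,1] is mu. *)
Definition parametrization (X : mmspace) (phi : R -> mmpt X) : Prop :=
  measurable_fun I01 phi /\
  forall A : set (mmpt X), measurable A ->
    mm_mu X A = lebesgue_measure (I01 `&` phi @^-1` A).

Definition me1 (f g : R -> R) : \bar R :=
  ereal_inf [set e%:E | e in [set e : R | 0 < e /\
     (lebesgue_measure (I01 `&` [set t | (e < `|f t - g t|)%R]) < e%:E)%E]].

Definition hausdorff_me1 (S1 S2 : set (R -> R)) : \bar R :=
  maxe (ereal_sup [set ereal_inf [set me1 a b | b in S2] | a in S1])
       (ereal_sup [set ereal_inf [set me1 a b | a in S1] | b in S2]).

Definition lip_param (X : mmspace) (phi : R -> mmpt X) : set (R -> R) :=
  [set (f \o phi) | f in [set f : mmpt X -> R | Lip1 f]].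

Definition dconc (X Y : mmspace) : \bar R :=
  ereal_inf [set hausdorff_me1 (lip_param pp.1) (lip_param pp.2) |
     pp in [set pp : (R -> mmpt X) * (R -> mmpt Y) |
              parametrization pp.1 /\ parametrization pp.2]].

Definition sqnorm (n : nat) (x : 'rV[R]_n) : R := \sum_(i < n) x ord0 i ^+ 2.

Definition sphere (n : nat) := {x : 'rV[R]_n.+1 | sqnorm x == 1}.

Definition sphere_dist (n : nat) (x y : sphere n) : R :=
  Num.sqrt (sqnorm (val x - val y)).

Definition orthogonal_mx (n : nat) (A : 'M[R]_n) : Prop := A *m A^T = 1%:M.

Definition is_sphere_mm (n : nat) (X : mmspace) : Prop :=
  exists e : sphere n -> mm_carrier X,
    bijective e /\
    (forall x y, mm_dist X (e x) (e y) = sphere_dist x y) /\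
    (forall (A : 'M[R]_n.+1) (B : set (mmpt X)), orthogonal_mx A -> measurable B ->
       mm_mu X [set e s | s in [set s : sphere n |
                  exists2 s', B (e s') & val s' = val s *m A]] = mm_mu X B).

Definition intrinsic_dimension (dim : mmspace -> \bar R) : Prop :=
  [/\ (forall X, (0 <= dim X)%E),
      (* Axiom 1: concentration *)
      (forall Xn : nat -> mmspace,
         ((fun n => dim (Xn n)) @ \oo --> +oo%E) <-> Levy_family Xn),
      (forall (Xn : nat -> mmspace) (X : mmspace),
         (fun n => dconc (Xn n) X) @ \oo --> 0%E ->
         (fun n => dim (Xn n)) @ \oo --> dim X) &
      (exists c1 c2 : R, exists N : nat, 0 < c1 /\ 0 < c2 /\
         forall (n : nat) (S : mmspace), (N <= n)%N -> is_sphere_mm n S ->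
           ((c1 * n%:R)%:E <= dim S)%E /\ (dim S <= (c2 * n%:R)%:E)%E)].

End MMSpaces.

From HB Require Import structures.
From mathcomp Require Import all_boot all_order all_algebra.
From mathcomp Require Import all_classical all_reals all_analysis.
From mathcomp Require Import lra.

(** By Axiom 1 applied to the constant sequence (X, X, ...), ∂(X) = +∞ exactly
    when the concentration function of X vanishes on (0, +∞).  On a singleton
    every feature is constant, so it does.  Conversely, if α_X vanishes then a
    feature f with μ{f ≤ t} ≥ 1/2 satisfies f ≤ t everywhere: otherwise a small
    ball around a point with f > t lies in a null tail {f ≥ t + ε}, against
    full support.  Since μ{f ≤ t} ≥ 1/2 or μ{f ≥ t} ≥ 1/2, every feature lies
    entirely on one side of every level t; for f = d(x, ·) and t = d(x, y)/2
    this forces d(x, y) = 0. *)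

Set Implicit Arguments.
Unset Strict Implicit.
Unset Printing Implicit Defensive.
Import Order.TTheory GRing.Theory Num.Theory.
Import numFieldNormedType.Exports.
Local Open Scope classical_set_scope.
Local Open Scope ring_scope.

Section Features.
Variables (R : realType) (X : mmspace R).

Local Notation d := (@mm_dist R X).
Local Notation mu := (@mm_mu R X).

Lemma mm_dist_ge0 x y : 0 <= d x y.
Proof. by case: (mm_metric X). Qed.

Lemma mm_dist_eq0 x y : d x y = 0 <-> x = y.
Proof. by case: (mm_metric X). Qed.

Lemma mm_distC x y : d x y = d y x.
Proof. by case: (mm_metric X). Qed.

Lemma mm_dist_triangle x y z : d x z <= d x y + d y z.
Proof. by case: (mm_metric X). Qed.

Lemma Lip1_dist (x0 : mmpt X) : Lip1 (d x0).
Proof.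
move=> x y; have := mm_dist_triangle x0 y x; have := mm_dist_triangle x0 x y.
rewrite (mm_distC y x) ler_norml => ? ?; apply/andP; split; lra.
Qed.

Lemma Lip1N (f : mmpt X -> R) : Lip1 f -> Lip1 (fun x => - f x).
Proof. by move=> Lf x y; rewrite -opprD normrN. Qed.

Lemma Lip1_maxr (f : mmpt X -> R) t : Lip1 f -> Lip1 (fun x => Num.max (f x) t).
Proof.
move=> Lf x y; have := Lf x y; rewrite !ler_norml => /andP[? ?].
by case: (leP (f x) t); case: (leP (f y) t) => ? ?; apply/andP; split; lra.
Qed.

Lemma Lip1_open_lt (f : mmpt X -> R) c : Lip1 f -> metric_open d [set x | f x < c].
Proof.
move=> Lf x /= fx; exists (c - f x); first by rewrite subr_gt0.
move=> y; rewrite /mball /= => dxy.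
by have := Lf y x; rewrite mm_distC ler_norml => /andP[? ?]; lra.
Qed.

Lemma Lip1_measurable_lt (f : mmpt X -> R) c : Lip1 f -> measurable [set x | f x < c].
Proof. by move=> Lf; apply: sub_sigma_algebra; apply: Lip1_open_lt. Qed.

Lemma Lip1_measurable_ge (f : mmpt X -> R) c : Lip1 f -> measurable [set x | c <= f x].
Proof.
move=> Lf; have -> : [set x | c <= f x] = ~` [set x | f x < c].
  by apply/seteqP; split => x /=; rewrite leNgt => /negP.
by apply: measurableC; exact: Lip1_measurable_lt.
Qed.

Lemma Lip1_measurable_le (f : mmpt X -> R) c : Lip1 f -> measurable [set x | f x <= c].
Proof.
move=> Lf; have -> : [set x | f x <= c] = [set x | - c <= - f x].
  by apply/seteqP; split => x /=; rewrite lerN2.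
exact: Lip1_measurable_ge (Lip1N Lf).
Qed.

Lemma mball_measurable (x : mmpt X) r : measurable (mball d x r : set (mmpt X)).
Proof. exact: Lip1_measurable_lt (Lip1_dist x). Qed.

Lemma median_le_witness (f : mmpt X -> R) M : is_median f M -> exists x, f x <= M.
Proof.
case=> _; apply: contraPP => /forallNP hnot.
have -> : [set x | f x <= M] = set0 by apply/seteqP; split => x // /hnot.
by rewrite measure0 lee_fin; lra.
Qed.

Lemma conc_fun_ge (f : mmpt X -> R) M eps : 0 < eps -> Lip1 f -> is_median f M ->
  (mu [set x | (M + eps <= f x)%R] <= conc_fun X eps)%E.
Proof.
move=> eps_gt0 Lf fM; rewrite /conc_fun (negbTE (lt0r_neq0 eps_gt0)).
by apply: ereal_sup_ubound; exists (f, M).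
Qed.

Lemma is_median_maxr (f : mmpt X -> R) t :
  ((2^-1)%:E <= mu [set x | (f x <= t)%R])%E -> is_median (fun x => Num.max (f x) t) t.
Proof.
move=> half_le; split.
  have -> : [set x | t <= Num.max (f x) t] = setT.
    by apply/seteqP; split => x //= _; rewrite le_max lexx orbT.
  by rewrite probability_setT lee_fin invf_le1 ?ler1n.
have -> : [set x | Num.max (f x) t <= t] = [set x | (f x <= t)%R].
  by apply/seteqP; split => x /=; rewrite ge_max lexx andbT.
exact: half_le.
Qed.

(* Truncating f from below at t makes t a median, so α_X(ε) bounds the tail. *)
Lemma conc_fun_eq0_tail (f : mmpt X -> R) t eps : 0 < eps -> conc_fun X eps = 0%E ->
  Lip1 f -> ((2^-1)%:E <= mu [set x | (f x <= t)%R])%E ->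
  mu [set x | (t + eps <= f x)%R] = 0%E.
Proof.
move=> eps_gt0 conc0 Lf half_le.
have -> : [set x | t + eps <= f x] = [set x | t + eps <= Num.max (f x) t].
  apply/seteqP; split => x /=; rewrite le_max; first by move=> ->.
  by case/orP => // ?; lra.
apply/eqP; rewrite eq_le measure_ge0 andbT -conc0.
exact/conc_fun_ge/is_median_maxr/half_le/Lip1_maxr.
Qed.

Lemma half_le_or (f : mmpt X -> R) t : Lip1 f ->
  ((2^-1)%:E <= mu [set x | (f x <= t)%R])%E \/ ((2^-1)%:E <= mu [set x | (t <= f x)%R])%E.
Proof.
move=> Lf; apply: contrapT => /not_orP[/negP + /negP]; rewrite -!ltNge => lt_le lt_ge.
have cover : (1 <= mu [set x | (f x <= t)%R] + mu [set x | (t <= f x)%R])%E.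
  have le_meas := Lip1_measurable_le t Lf; have ge_meas := Lip1_measurable_ge t Lf.
  rewrite -(probability_setT mu); apply: le_trans (measureU2 _ le_meas ge_meas).
  apply: le_measure; rewrite ?inE //; first exact: measurableU.
  by move=> x _ /=; case: (leP (f x) t) => ?; [left | right; exact: ltW].
have halves : 2^-1 + 2^-1 = 1 :> R by lra.
by have := lteD lt_le lt_ge; rewrite -EFinD halves => /(le_lt_trans cover); rewrite ltxx.
Qed.

Section Concentrated.
Hypothesis full : full_support X.
Hypothesis conc0 : forall eps, 0 < eps -> conc_fun X eps = 0%E.

Lemma Lip1_le_of_half (f : mmpt X -> R) t : Lip1 f ->
  ((2^-1)%:E <= mu [set x | (f x <= t)%R])%E -> forall x, f x <= t.
Proof.
move=> Lf half_le x; rewrite leNgt; apply/negP => t_lt.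
pose e := (f x - t) / 3.
have e_gt0 : 0 < e by rewrite divr_gt0 // subr_gt0.
have ball_sub : mball d x e `<=` [set y | (t + e <= f y)%R].
  move=> y; rewrite /mball /e /= => dxy.
  by have := Lf x y; rewrite ler_norml => /andP[? ?]; lra.
have ball_le : (mu (mball d x e) <= mu [set y | (t + e <= f y)%R])%E.
  by apply: le_measure; rewrite ?inE //;
    [exact: mball_measurable | exact: Lip1_measurable_ge].
have := full x e_gt0.
by rewrite (conc_fun_eq0_tail e_gt0 (conc0 e_gt0) Lf half_le) in ball_le;
  rewrite ltNge ball_le.
Qed.

Lemma Lip1_one_side (f : mmpt X -> R) t : Lip1 f ->
  (forall x, f x <= t) \/ (forall x, t <= f x).
Proof.
move=> Lf; case: (half_le_or t Lf) => [half_le|half_ge]; first by left; exact: Lip1_le_of_half.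
right=> x; rewrite -lerN2; apply: Lip1_le_of_half (Lip1N Lf) _ x.
by under eq_set do rewrite lerN2.
Qed.

Lemma concentrated_singleton : exists x0 : mm_carrier X, forall x, x = x0.
Proof.
exists point => x; apply/mm_dist_eq0; rewrite mm_distC.
have d_le0 : d point x <= 0.
  case: (Lip1_one_side (d point x / 2) (Lip1_dist point)) => [/(_ x)|/(_ point)].
    by lra.
  by move/mm_dist_eq0: (erefl (point : mmpt X)) => ->; lra.
by apply/eqP; rewrite eq_le d_le0 mm_dist_ge0.
Qed.

End Concentrated.

Lemma Lip1_cst c : Lip1 (fun _ : mmpt X => c).
Proof. by move=> x y; rewrite subrr normr0 mm_dist_ge0. Qed.

Lemma is_median_cst c : is_median (fun _ : mmpt X => c) c.
Proof.
rewrite /is_median.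
have -> : [set _ : mmpt X | c <= c] = setT by apply/seteqP; split => x //= _.
by split; rewrite probability_setT lee_fin invf_le1 ?ler1n.
Qed.

Lemma conc_fun_ge0 eps : (0 <= conc_fun X eps)%E.
Proof.
rewrite /conc_fun; case: eqP => _; first by rewrite lee_fin.
apply: (le_trans (measure_ge0 mu [set x | (0 + eps <= 0)%R])).
by apply: ereal_sup_ubound; exists (fun _ => 0, 0) => //; split;
  [exact: Lip1_cst | exact: is_median_cst].
Qed.

Lemma singleton_conc_fun_eq0 (x0 : mm_carrier X) : (forall x, x = x0) ->
  forall eps, 0 < eps -> conc_fun X eps = 0%E.
Proof.
move=> single eps eps_gt0; apply/eqP; rewrite eq_le conc_fun_ge0 andbT.
rewrite /conc_fun (negbTE (lt0r_neq0 eps_gt0)).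
apply: ge_ereal_sup => _ [[f M] [_ fM] <-] /=.
have [x /= fxM] := median_le_witness fM.
have -> : [set y | M + eps <= f y] = set0.
  by apply/seteqP; split => // y /=; rewrite (single y) -(single x); lra.
by rewrite measure0.
Qed.

End Features.

Lemma intrinsic_dimension_pinfty (R : realType) (dim : mmspace R -> \bar R)
  (X : mmspace R) : intrinsic_dimension dim ->
  dim X = +oo%E <-> forall eps, 0 < eps -> conc_fun X eps = 0%E.
Proof.
case=> _ axiom1 _ _.
have cst_lim (a l : \bar R) : (fun _ : nat => a) @ \oo --> l -> a = l.
  exact: cvg_unique (cvg_cst a).
split=> [dimX eps eps_gt0 | conc0].
  apply: cst_lim; apply: (axiom1 (fun _ => X)).1 eps eps_gt0.
  by rewrite dimX; exact: cvg_cst.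
apply: cst_lim; apply/(axiom1 (fun _ => X)).2 => eps eps_gt0.
by rewrite conc0 //; exact: cvg_cst.
Qed.

Theorem mainTheorem1 (R : realType) (dim : mmspace R -> \bar R)
  (Hdim : intrinsic_dimension dim) (X : mmspace R) (HX : full_support X) :
  dim X = +oo%E <-> (exists x0 : mm_carrier X, forall x : mm_carrier X, x = x0).
Proof.
rewrite (intrinsic_dimension_pinfty X Hdim); split.
  exact: concentrated_singleton.
by case=> x0; exact: singleton_conc_fun_eq0.
Qed.
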